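(* Let $\pi\subset\mathrm{Iso}(\mathbb R^n)$ be a crystallographic group. Then $$\mathcal C_\pi=\mathrm O(n)\cdot \mathrm Z_{\mathsf{GL}(n)}(H_\pi)=\{OP: O\in\mathrm O(n),\ P\in\mathsf{GL}(n,\mathbb R),\ PA=AP\ \forall A\in H_\pi\}.$$
   Context: $\mathrm{Iso}(\mathbb R^n)=\mathrm O(n)\ltimes\mathbb R^n$ with elements $(A,v)$ acting by $x\mapsto Ax+v$; a crystallographic group is a discrete subgroup with compact quotient; $H_\pi=\{A:\exists v,\ (A,v)\in\pi\}\subset\mathrm O(n)$ is its holonomy group. $\mathcal C_\pi=\{A\in\mathsf{GL}(n,\mathbb R):AH_\pi A^{-1}\subset\mathrm O(n)\}$, and $\mathrm Z_{\mathsf{GL}(n)}(H_\pi)$ is the centralizer of $H_\pi$ in $\mathsf{GL}(n,\mathbb R)$. *)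

From Stdlib Require Import Reals Lra ClassicalEpsilon FunctionalExtensionality.
From HB Require Import structures.
From mathcomp Require Import all_boot all_order all_algebra.
Set Implicit Arguments. Unset Strict Implicit. Unset Printing Implicit Defensive.
Import Order.TTheory GRing.Theory Num.Theory.

Definition Reqb (x y : R) : bool := if Req_EM_T x y then true else false.
Lemma Reqb_axiom : Equality.axiom Reqb.
Proof. by move=> x y; rewrite /Reqb; case: Req_EM_T => h; constructor. Qed.
HB.instance Definition _ := hasDecEq.Build R Reqb_axiom.

Definition Rfind (P : pred R) (n : nat) : option R :=
  match excluded_middle_informative (exists x, P x) with
  | left h => Some (proj1_sig (constructive_indefinite_description _ h))
  | right _ => None
  end.
Lemma Rfind_correct P n x : Rfind P n = Some x -> P x.
Proof.
rewrite /Rfind; case: excluded_middle_informative => // h [<-].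
exact: proj2_sig (constructive_indefinite_description _ h).
Qed.
Lemma Rfind_complete (P : pred R) : (exists x, P x) -> exists n, Rfind P n.
Proof. by move=> h; exists 0%N; rewrite /Rfind; case: excluded_middle_informative. Qed.
Lemma Rfind_ext (P Q : pred R) : P =1 Q -> Rfind P =1 Rfind Q.
Proof.
move=> h; have -> : P = Q by apply: functional_extensionality.
by [].
Qed.
HB.instance Definition _ := hasChoice.Build R Rfind_correct Rfind_complete Rfind_ext.

Lemma R_addrA : forall x y z : R, Rplus x (Rplus y z) = Rplus (Rplus x y) z. Proof. by move=> *; rewrite Rplus_assoc. Qed.
Lemma R_addrC : forall x y : R, Rplus x y = Rplus y x. Proof. exact: Rplus_comm. Qed.
Lemma R_add0r : forall x : R, Rplus R0 x = x. Proof. exact: Rplus_0_l. Qed.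
Lemma R_addNr : forall x : R, Rplus (Ropp x) x = R0. Proof. exact: Rplus_opp_l. Qed.
HB.instance Definition _ :=
  GRing.isZmodule.Build R R_addrA R_addrC R_add0r R_addNr.

Lemma R_mulrA : forall x y z : R, Rmult x (Rmult y z) = Rmult (Rmult x y) z. Proof. by move=> *; rewrite Rmult_assoc. Qed.
Lemma R_mulrC : forall x y : R, Rmult x y = Rmult y x. Proof. exact: Rmult_comm. Qed.
Lemma R_mul1r : forall x : R, Rmult R1 x = x. Proof. exact: Rmult_1_l. Qed.
Lemma R_mulrDl : forall x y z : R, Rmult (Rplus x y) z = Rplus (Rmult x z) (Rmult y z).
Proof. by move=> x y z; rewrite Rmult_plus_distr_r. Qed.
Lemma R_oner_neq0 : R1 != R0.
Proof. by apply/eqP; exact: R1_neq_R0. Qed.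
HB.instance Definition _ := GRing.Zmodule_isComNzRing.Build R
  R_mulrA R_mulrC R_mul1r R_mulrDl R_oner_neq0.

Local Open Scope ring_scope.
Definition Rinvx (x : R) : R := if Reqb x R0 then R0 else Rinv x.
Lemma R_mulVf (x : R) : x != 0 -> (Rinvx x * x = 1)%R.
Proof.
rewrite /Rinvx; case: Reqb_axiom => [-> | h _]; first by rewrite eqxx.
exact: Rinv_l.
Qed.
Lemma R_invr0 : Rinvx 0 = 0.
Proof. by rewrite /Rinvx; case: Reqb_axiom. Qed.
HB.instance Definition _ := GRing.ComNzRing_isField.Build R R_mulVf R_invr0.

Definition Rleb (x y : R) : bool := if Rle_dec x y then true else false.
Definition Rltb (x y : R) : bool := if Rlt_dec x y then true else false.
Lemma RlebP x y : reflect (Rle x y) (Rleb x y).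
Proof. by rewrite /Rleb; case: Rle_dec => h; constructor. Qed.
Lemma RltbP x y : reflect (Rlt x y) (Rltb x y).
Proof. by rewrite /Rltb; case: Rlt_dec => h; constructor. Qed.

Lemma R_le0_add (x y : R) : Rleb 0 x -> Rleb 0 y -> Rleb 0 (x + y).
Proof. move=> /RlebP h1 /RlebP h2; apply/RlebP; rewrite /GRing.add /=; lra. Qed.
Lemma R_le0_mul (x y : R) : Rleb 0 x -> Rleb 0 y -> Rleb 0 (x * y).
Proof. move=> /RlebP h1 /RlebP h2; apply/RlebP; exact: Rmult_le_pos. Qed.
Lemma R_le0_anti (x : R) : Rleb 0 x -> Rleb x 0 -> x = 0.
Proof. move=> /RlebP h1 /RlebP h2; rewrite /GRing.zero /=; lra. Qed.
Lemma R_sub_ge0 (x y : R) : Rleb 0 (y - x) = Rleb x y.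
Proof.
apply/RlebP/RlebP; rewrite /GRing.add /GRing.opp /=; lra.
Qed.
Lemma R_le0_total (x : R) : Rleb 0 x || Rleb x 0.
Proof. by case: (Rle_dec 0 x) => h; apply/orP; [left|right]; apply/RlebP; lra. Qed.
Lemma R_normN (x : R) : Rabs (- x) = Rabs x.
Proof. exact: Rabs_Ropp. Qed.
Lemma R_ge0_norm (x : R) : Rleb 0 x -> Rabs x = x.
Proof. by move=> /RlebP h; rewrite Rabs_right //; lra. Qed.
Lemma R_lt_def (x y : R) : Rltb x y = (y != x) && Rleb x y.
Proof.
apply/RltbP/andP.
  by move=> h; split; [apply/eqP; lra | apply/RlebP; lra].
by case=> /eqP h1 /RlebP h2; lra.
Qed.
HB.instance Definition _ := Num.IntegralDomain_isLeReal.Build R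
  R_le0_add R_le0_mul R_le0_anti R_sub_ge0 R_le0_total R_normN R_ge0_norm R_lt_def.


Definition orth_mx (n : nat) (A : 'M[R]_n) : Prop := A^T *m A = 1%:M.

Definition isom (n : nat) : Type := ('M[R]_n * 'cV[R]_n)%type.
Definition iso_act (n : nat) (g : isom n) (x : 'cV[R]_n) : 'cV[R]_n :=
  g.1 *m x + g.2.
(* Group law of Iso(R^n) = O(n) |x R^n (composition of maps). *)
Definition iso_one (n : nat) : isom n := (1%:M, 0).
Definition iso_mul (n : nat) (g h : isom n) : isom n :=
  (g.1 *m h.1, g.1 *m h.2 + g.2).
Definition iso_inv (n : nat) (g : isom n) : isom n :=
  (g.1^T, - (g.1^T *m g.2)).

Definition is_iso_subgroup (n : nat) (pi : isom n -> Prop) : Prop :=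
  [/\ forall g, pi g -> orth_mx g.1,
      pi (iso_one n),
      forall g h, pi g -> pi h -> pi (iso_mul g h) &
      forall g, pi g -> pi (iso_inv g)].

(* h lies in the open box of radius eps around g, for the (product)
   topology of Iso(R^n) as a subspace of M_n(R) x R^n *)
Definition iso_close (n : nat) (eps : R) (g h : isom n) : Prop :=
  (forall i j, `|h.1 i j - g.1 i j| < eps) /\ (forall i, `|h.2 i 0 - g.2 i 0| < eps).

Definition iso_discrete (n : nat) (pi : isom n -> Prop) : Prop :=
  forall g, pi g -> exists2 eps : R, 0 < eps &
    forall h, pi h -> iso_close eps g h -> h = g.

(* the quotient R^n / pi is compact: some compact set (a closed cube)
   meets every pi-orbit, i.e. its pi-translates cover R^n *)
Definition iso_cocompact (n : nat) (pi : isom n -> Prop) : Prop :=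
  exists r : R, forall x : 'cV[R]_n, exists2 g, pi g &
    forall i, `|(iso_act g x) i 0| <= r.

Definition crystallographic (n : nat) (pi : isom n -> Prop) : Prop :=
  [/\ is_iso_subgroup pi, iso_discrete pi & iso_cocompact pi].

Definition holonomy (n : nat) (pi : isom n -> Prop) (A : 'M[R]_n) : Prop :=
  exists v, pi (A, v).

Definition Cpi (n : nat) (pi : isom n -> Prop) (A : 'M[R]_n) : Prop :=
  A \in unitmx /\ forall h, holonomy pi h -> orth_mx (A *m h *m invmx A).

Definition centralizer_GL (n : nat) (pi : isom n -> Prop) (P : 'M[R]_n) : Prop :=
  P \in unitmx /\ forall h, holonomy pi h -> P *m h = h *m P.

(* An invertible A factors as A = O S with O orthogonal and
   S the positive square root of the Gram matrix A^T A; by the spectral theorem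
   (applied over R[i]) S is a polynomial in A^T A.  If h is orthogonal then
   A h A^-1 is orthogonal exactly when h commutes with A^T A, hence then with
   S.  Conversely O P h (O P)^-1 = O h O^-1 is orthogonal when P commutes with
   h. *)

From Stdlib Require Import Reals Lra FunctionalExtensionality.
From HB Require Import structures.
From mathcomp Require Import all_boot all_order all_algebra.
From mathcomp Require Import complex spectral sesquilinear.
Set Implicit Arguments. Unset Strict Implicit. Unset Printing Implicit Defensive.
Import Order.TTheory GRing.Theory Num.Theory.
Local Open Scope ring_scope.

Lemma poly_interpolation (F : fieldType) (s : seq F) (g : F -> F) :
  exists p : {poly F}, {in s, forall x, p.[x] = g x}.
Proof.
elim: s => [|x s [p p_interp]]; first by exists 0.
have [xs|xNs] := boolP (x \in s).
  by exists p => y; rewrite inE => /predU1P[->|]; apply: p_interp.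
pose P := \prod_(y <- s) ('X - y%:P).
have Px_neq0 : P.[x] != 0.
  rewrite horner_prod prodf_seq_neq0; apply/allP => y ys /=.
  by rewrite hornerXsubC subr_eq0; apply: contraNneq xNs => ->.
have Ps0 y : y \in s -> P.[y] = 0.
  by move=> ys; rewrite horner_prod (big_rem y) //= hornerXsubC subrr mul0r.
exists (p + ((g x - p.[x]) / P.[x]) *: P) => y /predU1P[->|ys].
  by rewrite hornerD hornerZ mulfVK // addrC subrK.
by rewrite hornerD hornerZ (Ps0 y ys) mulr0 addr0 p_interp.
Qed.

Lemma trmx_horner_mx (K : comNzRingType) n (M : 'M[K]_n.+1) (p : {poly K}) :
  M^T = M -> (horner_mx M p)^T = horner_mx M p.
Proof.
move=> M_sym; elim/poly_ind: p => [|p c IHp]; first by rewrite !rmorph0 trmx0.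
rewrite !rmorphD !rmorphM /= !horner_mx_X !horner_mx_C -!mulmxE.
rewrite linearD /= trmx_mul tr_scalar_mx IHp M_sym.
by rewrite (comm_horner_mx p (erefl (M *m M))).
Qed.

Section GramMatrix.
Variable R : rcfType.
Local Notation toC := (real_complex R).
Local Open Scope complex_scope.
Local Open Scope sesquilinear_scope.

Lemma trmxC_map_real_complex m n (A : 'M[R]_(m, n)) :
  (map_mx toC A)^t* = map_mx toC A^T.
Proof.
apply/matrixP => i j; rewrite !mxE; apply: conj_Creal.
by apply/complex_realP; exists (A j i).
Qed.

Lemma gram_normalmx n (A : 'M[R]_n) : map_mx toC (A^T *m A) \is normalmx.
Proof.
apply/normalmxP; suff -> : (map_mx toC (A^T *m A))^t* = map_mx toC (A^T *m A) by [].
by rewrite trmxC_map_real_complex trmx_mul trmxK.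
Qed.

Lemma gram_spectral_diag_ge0 n (A : 'M[R]_n) i :
  0 <= spectral_diag (map_mx toC (A^T *m A)) 0 i.
Proof.
set M := map_mx toC (A^T *m A); set U := spectralmx M.
have U_unitary : U \is unitarymx := spectral_unitarymx M.
have M_diag : M = invmx U *m diag_mx (spectral_diag M) *m U.
  exact/orthomx_spectralP/gram_normalmx.
(* the diagonal form is U M U^* = V^* V with V := A U^*, a Gram matrix again *)
pose V := map_mx toC A *m U^t*.
have -> : spectral_diag M 0 i = (V^t* *m V) i i.
  have -> : V^t* *m V = U *m M *m invmx U.
    rewrite /V trmx_mul map_mxM trmxCK trmxC_map_real_complex.
    by rewrite (invmx_unitary U_unitary) /M map_mxM !mulmxA.
  have U_unit := unitarymx_unit U_unitary.
  by rewrite {2}M_diag !mulmxA (mulmxV U_unit) mul1mx (mulmxK U_unit) mxE eqxx mulr1n.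
rewrite mxE; apply: sumr_ge0 => k _; rewrite !mxE mulrC; exact: mul_conjC_ge0.
Qed.

Lemma complex_ge0_real (x : R[i]) :
  0 <= x -> x = (complex.Re x)%:C /\ 0 <= complex.Re x.
Proof. by case: x => a b; rewrite lecE /= => /andP[/eqP -> ->]. Qed.

Lemma gram_sqrt_poly n (A : 'M[R]_n.+1) :
  exists q : {poly R}, horner_mx (A^T *m A) q *m horner_mx (A^T *m A) q = A^T *m A.
Proof.
set M := A^T *m A; set Mc := map_mx toC M.
set U := spectralmx Mc; set d := spectral_diag Mc.
have U_unit : U \in unitmx := spectral_unit Mc.
have Mc_diag : Mc = invmx U *m diag_mx d *m U.
  exact/orthomx_spectralP/gram_normalmx.
pose r i := complex.Re (d 0 i).
have d_real i : d 0 i = (r i)%:C /\ 0 <= r i.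
  exact/complex_ge0_real/gram_spectral_diag_ge0.
have [q q_sqrt] := poly_interpolation [seq r i | i <- enum 'I_n.+1] Num.sqrt.
exists q; apply: (@map_mx_inj _ _ toC); rewrite map_mxM !map_horner_mx -/Mc.
have -> : horner_mx Mc (map_poly toC q) =
    invmx U *m diag_mx (\row_i (Num.sqrt (r i))%:C) *m U.
  rewrite {1}Mc_diag (horner_mx_uconjC _ _ U_unit) horner_mx_diag.
  congr (_ *m diag_mx _ *m _); apply/rowP => i.
  rewrite !mxE (d_real i).1 horner_map q_sqrt //.
  by apply: map_f; rewrite mem_enum.
rewrite [in RHS]Mc_diag -!mulmxA (mulKVmx U_unit) [_ *m (_ *m U)]mulmxA.
congr (_ *m (_ *m _)).
rewrite mul_diag_mx; apply/matrixP => i j; rewrite !mxE.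
case: (i == j); last by rewrite !mulr0n mulr0.
by rewrite !mulr1n -rmorphM /= -expr2 sqr_sqrtr ?(d_real i).2 // -(d_real i).1.
Qed.

Lemma polar_decomposition n (A : 'M[R]_n) : A \in unitmx ->
  exists S : 'M[R]_n, [/\ S \in unitmx,
    (A *m invmx S)^T *m (A *m invmx S) = 1%:M &
    forall h, h *m (A^T *m A) = (A^T *m A) *m h -> h *m S = S *m h].
Proof.
case: n A => [|n] A A_unit.
  by exists 1%:M; split=> [||h _]; rewrite ?unitmx1 // [LHS]flatmx0 [RHS]flatmx0.
set M := A^T *m A; have [q sqrt_M] := gram_sqrt_poly A; rewrite -/M in sqrt_M.
set S := horner_mx M q in sqrt_M.
have S_sym : S^T = S by apply: trmx_horner_mx; rewrite /M trmx_mul trmxK.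
have S_unit : S \in unitmx.
  have M_unit : M \in unitmx by rewrite unitmx_mul unitmx_tr A_unit.
  by move: M_unit; rewrite -sqrt_M unitmx_mul => /andP[].
exists S; split=> [//||h hM_comm]; last exact: comm_mx_horner hM_comm.
rewrite trmx_mul trmx_inv S_sym mulmxA -[_ *m A^T *m A]mulmxA -/M -sqrt_M.
by rewrite mulmxA (mulmxK S_unit) (mulVmx S_unit); reflexivity.
Qed.

End GramMatrix.

Section OrthogonalConjugation.
Variables (K : comUnitRingType) (n : nat).
Implicit Types A O P h : 'M[K]_n.

Lemma orthogonal_conj O h : O^T *m O = 1%:M -> h^T *m h = 1%:M ->
  (O *m h *m O^T)^T *m (O *m h *m O^T) = 1%:M.
Proof.
move=> O_orth h_orth; rewrite !trmx_mul trmxK !mulmxA -[_ *m O^T *m O]mulmxA O_orth.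
by rewrite mulmx1 -[_ *m h^T *m h]mulmxA h_orth mulmx1 mulmx1C.
Qed.

Lemma conj_mulmx_comm O P h : O^T *m O = 1%:M -> P \in unitmx -> P *m h = h *m P ->
  O *m P *m h *m invmx (O *m P) = O *m h *m O^T.
Proof.
move=> O_orth P_unit Ph_comm.
have OP_unit : O *m P \in unitmx by rewrite unitmx_mul P_unit (mulmx1_unit O_orth).2.
rewrite -[RHS](mulmxK OP_unit); congr (_ *m _).
by rewrite -!mulmxA [O^T *m _]mulmxA O_orth mul1mx Ph_comm.
Qed.

Lemma orthogonal_conj_comm_gram A h : A \in unitmx -> h^T *m h = 1%:M ->
  (A *m h *m invmx A)^T *m (A *m h *m invmx A) = 1%:M ->
  h *m (A^T *m A) = (A^T *m A) *m h.
Proof.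
move=> A_unit h_orth conj_orth; rewrite !trmx_mul trmx_inv !mulmxA in conj_orth.
have At_unit : A^T \in unitmx by rewrite unitmx_tr.
(* orthogonality of A h A^-1 says that h preserves the Gram form A^T A *)
have gram_inv : h^T *m (A^T *m A) *m h = A^T *m A.
  transitivity (A^T *m (invmx A^T *m h^T *m A^T *m A *m h *m invmx A) *m A).
    by rewrite !mulmxA (mulmxV At_unit) mul1mx (mulmxKV A_unit).
  by rewrite conj_orth mulmx1.
by rewrite -[in LHS]gram_inv !mulmxA (mulmx1C h_orth) mul1mx.
Qed.

End OrthogonalConjugation.

Lemma continuity_horner (p : {poly R}) : continuity (fun x => p.[x]).
Proof.
elim/poly_ind: p => [|q c IHq].
  by apply: continuity_const => x y; rewrite !horner0.
have -> : (fun x => (q * 'X + c%:P).[x]) =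
    plus_fct (mult_fct (fun x => q.[x]) id) (fct_cte c).
  by apply: functional_extensionality => x; rewrite hornerMXaddC.
apply: continuity_plus; last exact: continuity_const.
by apply: continuity_mult => //; exact: derivable_continuous derivable_id.
Qed.

Lemma R_real_closed_axiom : Num.real_closed_axiom R.
Proof.
move=> p a b /RlebP le_ab /andP[/RlebP pa_le0 /RlebP pb_ge0].
have [pa0|pa_neq0] := Req_EM_T p.[a] 0.
  by exists a; [apply/andP; split; apply/RlebP; lra | apply/eqP].
have [pb0|pb_neq0] := Req_EM_T p.[b] 0.
  by exists b; [apply/andP; split; apply/RlebP; lra | apply/eqP].
have lt_ab : Rlt a b.
  case: (Rle_lt_or_eq_dec _ _ le_ab) => // eq_ab; subst b.
  by exfalso; apply: pa_neq0; rewrite /GRing.zero /= in pa_le0 pb_ge0 *; lra.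
rewrite /GRing.zero /= in pa_le0 pa_neq0 pb_ge0 pb_neq0.
have [z [[le_az le_zb] pz0]] := IVT (fun x => p.[x]) a b (continuity_horner p) lt_ab
  ltac:(lra) ltac:(lra).
by exists z; [apply/andP; split; apply/RlebP; lra | apply/eqP].
Qed.

(* Stdlib's R is real closed (by the IVT); this makes R[i] a numClosedFieldType,
   so the spectral theorem above applies to real matrices. *)
HB.instance Definition _ := Num.RealField_isClosed.Build R R_real_closed_axiom.

Theorem mainTheorem10 (n : nat) (pi : isom n -> Prop) :
  crystallographic pi ->
  forall A : 'M[R]_n,
    Cpi pi A <->
    exists O P : 'M[R]_n, [/\ orth_mx O, centralizer_GL pi P & A = O *m P].
Proof.
move=> [[iso_orth _ _ _] _ _] A.
have hol_orth h : holonomy pi h -> orth_mx h by case=> v /iso_orth.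
split.
- case=> A_unit A_conj.
  have [S [S_unit O_orth S_comm]] := polar_decomposition A_unit.
  exists (A *m invmx S), S; split=> //; last by rewrite mulmxKV.
  split=> // h hol_h; apply/esym/S_comm.
  exact: orthogonal_conj_comm_gram A_unit (hol_orth h hol_h) (A_conj h hol_h).
- case=> O [P [O_orth [P_unit P_comm] ->]].
  split; first by rewrite unitmx_mul P_unit (mulmx1_unit O_orth).2.
  move=> h hol_h; rewrite /orth_mx conj_mulmx_comm ?P_comm //.
  exact: orthogonal_conj (hol_orth h hol_h).
Qed.
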